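(* Let $\varepsilon>0$ and $\delta\in(0,1)$, and set $p=1-e^{-\varepsilon}$ and $k=\left\lceil\frac{1}{\varepsilon}\ln\left(\frac{e^{\varepsilon}+2\delta-1}{(e^{\varepsilon}+1)\delta}\right)\right\rceil$. Let $f$ be an integer-valued query on databases with sensitivity $1$ (i.e. $|f(D)-f(D')|\le1$ whenever $D'$ is obtained from $D$ by adding or removing one user). The truncated geometric mechanism, which on input $D$ outputs $f(D)+X$ with $X$ drawn from the $k$-truncated symmetric geometric distribution with parameter $p$, is $(\varepsilon,\delta)$-differentially private.
   Context: For $p\in(0,1)$ and an integer $k\ge1$, the $k$-truncated symmetric geometric distribution ($k$-TSGD) with parameter $p$ is the distribution on $\mathbb{Z}$ with $\Pr[X=x]=c\,(1-p)^{|x|}$ for $x\in[-k,k]\cap\mathbb{Z}$ and $0$ otherwise, where $c=\frac{p}{1+(1-p)-2(1-p)^{k+1}}$. A randomized mechanism $\mathcal{M}$ is $(\varepsilon,\delta)$-differentially private if for any databases $D,D'$ where $D'$ is obtained from $D$ by adding or removing one user, and all sets $S$ of outputs, $\Pr[\mathcal{M}(D)\in S]\le e^{\varepsilon}\Pr[\mathcal{M}(D')\in S]+\delta$. *)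

From HB Require Import structures.
From mathcomp Require Import all_boot all_order all_algebra.
From mathcomp Require Import all_classical all_reals.
From mathcomp Require Import all_analysis.
Set Implicit Arguments. Unset Strict Implicit. Unset Printing Implicit Defensive.
Import Order.TTheory GRing.Theory Num.Theory.
Local Open Scope ring_scope.
Local Open Scope classical_set_scope.

Definition tsgd_c {R : realType} (p : R) (k : nat) : R :=
  p / (1 + (1 - p) - 2 * (1 - p) ^+ k.+1).

Definition tsgd_pmf {R : realType} (p : R) (k : nat) (x : int) : R :=
  if (`|x| <= k)%N then tsgd_c p k * (1 - p) ^+ `|x| else 0.

(* Pr[f(D) + X \in S]; X is supported on [-k, k], enumerated as i - k, i < 2k+1 *)
Definition tgm_prob {R : realType} (p : R) (k : nat) (fD : int) (S : set int) : R :=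
  \sum_(i < (k + k).+1)
     (if (fD + (i%:Z - k%:Z)) \in S then tsgd_pmf p k (i%:Z - k%:Z) else 0).

(* Databases are finite multisets (sequences up to permutation) of users in U;
   D' is a neighbour of D if it is obtained by adding or removing one user. *)
Definition neighbour {U : eqType} (D D' : seq U) : Prop :=
  exists u : U, perm_eq D' (u :: D) \/ perm_eq D (u :: D').

Definition tgm_dp {R : realType} {U : eqType} (f : seq U -> int) (p : R) (k : nat)
  (eps delta : R) : Prop :=
  forall D D' : seq U, neighbour D D' ->
  forall S : set int,
    tgm_prob p k (f D) S <= expR eps * tgm_prob p k (f D') S + delta.

From HB Require Import structures.
From mathcomp Require Import all_boot all_order all_algebra.
From mathcomp Require Import all_classical all_reals.
From mathcomp Require Import all_analysis.
From mathcomp Require Import lra zify.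
Import Order.TTheory GRing.Theory Num.Theory.
Local Open Scope ring_scope.

(* The ratio Pr[X = x] / Pr[X = y] of the k-TSGD is (1 - p)^(|x| - |y|), which is at
   most 1 / (1 - p) when |x| <= |y| + 1.  Comparing the output distributions on the
   inputs a and a + 1 term by term therefore loses a factor 1 / (1 - p), except for
   the single output a - k, which has no partner; its probability c (1 - p)^k is
   the additive slack.  For p = 1 - e^-eps the factor is e^eps, and the choice of k
   makes c (1 - p)^k at most delta. *)

Section ShiftedSums.
Context {R : numDomainType}.
Implicit Types (F G : nat -> R) (C : R).

Lemma ler_sum_shift_succ F G C n :
  0 <= C -> 0 <= G n -> (forall i, (i < n)%N -> F i.+1 <= C * G i) ->
  \sum_(i < n.+1) F i <= C * \sum_(i < n.+1) G i + F 0%N.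
Proof.
move=> C_ge0 Gn_ge0 FG; rewrite big_ord_recl big_ord_recr /= [leRHS]addrC lerD2l.
rewrite mulrDr; apply: ler_wpDr; first exact: mulr_ge0.
by rewrite mulr_sumr; apply: ler_sum => i _; apply: FG.
Qed.

Lemma ler_sum_shift_pred F G C n :
  0 <= C -> 0 <= G 0%N -> (forall i, (i < n)%N -> F i <= C * G i.+1) ->
  \sum_(i < n.+1) F i <= C * \sum_(i < n.+1) G i + F n.
Proof.
move=> C_ge0 G0_ge0 FG; rewrite big_ord_recr big_ord_recl /= lerD2r.
rewrite mulrDr addrC; apply: ler_wpDr; first exact: mulr_ge0.
by rewrite mulr_sumr; apply: ler_sum => i _; apply: FG.
Qed.

End ShiftedSums.

Definition tgm_term {R : realType} (p : R) (k : nat) (a : int) (S : set int)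
    (i : nat) : R :=
  if a + (i%:Z - k%:Z) \in S then tsgd_pmf p k (i%:Z - k%:Z) else 0.

Section TruncatedGeometric.
Variables (R : realType) (p : R) (k : nat).
Hypothesis p_bounds : 0 < p < 1.

Let q_gt0 : 0 < 1 - p. Proof. by case/andP: p_bounds; lra. Qed.
Let q_lt1 : 1 - p < 1. Proof. by case/andP: p_bounds; lra. Qed.

Lemma tsgd_c_gt0 : 0 < tsgd_c p k.
Proof.
have qk_le_q : (1 - p) ^+ k.+1 <= 1 - p.
  by rewrite -[leRHS]expr1; apply: ler_wiXn2l; rewrite ?ltW.
rewrite /tsgd_c divr_gt0 //; first by case/andP: p_bounds.
by move: q_lt1 qk_le_q; lra.
Qed.

Lemma tsgd_pmf_ge0 x : 0 <= tsgd_pmf p k x.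
Proof.
rewrite /tsgd_pmf; case: ifP => // _.
by rewrite mulr_ge0 ?exprn_ge0 ?ltW ?tsgd_c_gt0.
Qed.

Lemma tsgd_pmf_edge x : `|x|%N = k -> tsgd_pmf p k x = tsgd_c p k * (1 - p) ^+ k.
Proof. by move=> absx; rewrite /tsgd_pmf absx leqnn. Qed.

Let edge_ge0 : 0 <= tsgd_c p k * (1 - p) ^+ k.
Proof. by rewrite -(@tsgd_pmf_edge k%:Z) ?tsgd_pmf_ge0. Qed.

Lemma tsgd_pmf_le_step x y : (`|y| <= `|x|.+1)%N -> (`|y| <= k)%N ->
  tsgd_pmf p k x <= (1 - p)^-1 * tsgd_pmf p k y.
Proof.
move=> yx yk; have [xk|xk] := boolP (`|x| <= k)%N; last first.
  rewrite {1}/tsgd_pmf (negbTE xk); apply: mulr_ge0 (tsgd_pmf_ge0 y).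
  by rewrite invr_ge0 ltW.
rewrite /tsgd_pmf xk yk mulrCA; apply: ler_wpM2l; first exact: ltW tsgd_c_gt0.
by rewrite ler_pdivlMl // -exprS; apply: ler_wiXn2l; rewrite ?ltW.
Qed.

Lemma tgm_term_ge0 a S i : 0 <= tgm_term p k a S i.
Proof. by rewrite /tgm_term; case: ifP => // _; apply: tsgd_pmf_ge0. Qed.

Lemma tgm_term_edge a S i : `|i%:Z - k%:Z|%N = k ->
  tgm_term p k a S i <= tsgd_c p k * (1 - p) ^+ k.
Proof. by move=> absi; rewrite /tgm_term tsgd_pmf_edge //; case: ifP. Qed.

Lemma tgm_prob_succ a S :
  tgm_prob p k a S <= (1 - p)^-1 * tgm_prob p k (a + 1) S + tsgd_c p k * (1 - p) ^+ k.
Proof.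
apply: le_trans
  (ler_sum_shift_succ (tgm_term p k a S) (tgm_term p k (a + 1) S) (1 - p)^-1 (k + k) _ _ _) _.
- by rewrite invr_ge0 ltW.
- exact: tgm_term_ge0.
- move=> i ik; rewrite /tgm_term.
  have -> : a + (i.+1%:Z - k%:Z) = a + 1 + (i%:Z - k%:Z) by lia.
  by case: ifP => _; [apply: tsgd_pmf_le_step; lia | rewrite mulr0].
- by rewrite lerD2l tgm_term_edge //; lia.
Qed.

Lemma tgm_prob_pred a S :
  tgm_prob p k a S <= (1 - p)^-1 * tgm_prob p k (a - 1) S + tsgd_c p k * (1 - p) ^+ k.
Proof.
apply: le_trans
  (ler_sum_shift_pred (tgm_term p k a S) (tgm_term p k (a - 1) S) (1 - p)^-1 (k + k) _ _ _) _.
- by rewrite invr_ge0 ltW.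
- exact: tgm_term_ge0.
- move=> i ik; rewrite /tgm_term.
  have -> : a + (i%:Z - k%:Z) = a - 1 + (i.+1%:Z - k%:Z) by lia.
  by case: ifP => _; [apply: tsgd_pmf_le_step; lia | rewrite mulr0].
- by rewrite lerD2l tgm_term_edge //; lia.
Qed.

Lemma tgm_prob_neighbour a b S : `|a - b| <= 1 ->
  tgm_prob p k a S <= (1 - p)^-1 * tgm_prob p k b S + tsgd_c p k * (1 - p) ^+ k.
Proof.
move=> ab; have [->|[->|->]] : b = a + 1 \/ b = a - 1 \/ b = a by lia.
- exact: tgm_prob_succ.
- exact: tgm_prob_pred.
have prob_ge0 : 0 <= tgm_prob p k a S by apply: sumr_ge0 => i _; apply: tgm_term_ge0.
by apply: ler_wpDr => //; rewrite ler_peMl // invf_ge1 // ltW.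
Qed.

End TruncatedGeometric.

Lemma expRN_exprn_le_inv (R : realType) (eps x : R) (k : nat) :
  0 < x -> ln x <= k%:R * eps -> expR (- eps) ^+ k <= x^-1.
Proof.
move=> x_gt0 lnx; rewrite -expRM_natl -(lnK (x_gt0 : x \in Num.pos)) -expRN ler_expR.
by rewrite mulrN lerN2.
Qed.

Lemma tsgd_tail_le (R : realType) (eps delta : R) (k : nat) :
  0 < eps -> 0 < delta < 1 ->
  ln ((expR eps + 2 * delta - 1) / ((expR eps + 1) * delta)) <= k%:R * eps ->
  tsgd_c (1 - expR (- eps)) k * expR (- eps) ^+ k <= delta.
Proof.
move=> eps_gt0 /andP[delta_gt0 delta_lt1] lnk.
set q := expR (- eps); set e := expR eps.
set A := e + 2 * delta - 1; set B := (e + 1) * delta.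
have eq1 : e * q = 1 by rewrite /e /q expRxMexpNx_1.
have e_gt1 : 1 < e by rewrite /e expR_gt1.
have q_gt0 : 0 < q by apply: expR_gt0.
have q_lt1 : q < 1 by rewrite /q expR_lt1 oppr_lt0.
have A_gt0 : 0 < A by rewrite /A; lra.
have B_gt0 : 0 < B by rewrite /B mulr_gt0 //; lra.
have qkA_le_B : q ^+ k * A <= B.
  rewrite -ler_pdivlMr // -[B / A]invf_div.
  by apply: expRN_exprn_le_inv; rewrite ?divr_gt0.
have qk_ge0 : 0 <= q ^+ k by rewrite exprn_ge0 ?ltW.
have den_gt0 : 0 < 1 + q - 2 * q ^+ k.+1.
  have := @tsgd_c_gt0 R (1 - q) k; rewrite /tsgd_c subKr.
  by rewrite pmulr_rgt0 ?invr_gt0 //; lra.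
(* in units of q = 1/e, the inequality to prove is q * (q^k A) <= q * B *)
rewrite /tsgd_c subKr mulrAC ler_pdivrMr // exprS.
have := ler_wpM2l (ltW q_gt0) qkA_le_B; rewrite /A /B; nra.
Qed.

Theorem theorem4 (R : realType) (U : eqType) (eps delta : R) (k : nat)
  (f : seq U -> int) :
  0 < eps -> 0 < delta < 1 ->
  k%:Z = Num.ceil (ln ((expR eps + 2 * delta - 1) / ((expR eps + 1) * delta)) / eps) ->
  (forall D D' : seq U, neighbour D D' -> `|f D - f D'| <= 1) ->
  tgm_dp f (1 - expR (- eps)) k eps delta.
Proof.
move=> eps_gt0 delta_bounds k_def f_sens D D' DD' S.
have p_bounds : 0 < 1 - expR (- eps) < 1.
  by rewrite subr_gt0 expR_lt1 oppr_lt0 eps_gt0 ltrBlDr ltrDl expR_gt0.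
have tail : tsgd_c (1 - expR (- eps)) k * expR (- eps) ^+ k <= delta.
  apply: tsgd_tail_le => //; rewrite -ler_pdivrMr //.
  by have := ceil_ge (ln ((expR eps + 2 * delta - 1) / ((expR eps + 1) * delta)) / eps);
    rewrite -k_def.
apply: le_trans (@tgm_prob_neighbour R _ k p_bounds _ _ S (f_sens D D' DD')) _.
by rewrite subKr -expRN opprK lerD2l.
Qed.
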